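(* Let $f:A\to B$ be a ring homomorphism, $\mathfrak b$ an ideal of $B$, and $A\bowtie^f\mathfrak b:=\{(a,f(a)+b): a\in A,\ b\in\mathfrak b\}\subseteq A\times B$. For a maximal ideal $\mathfrak m$ of $A$ let $S_{\mathfrak m}:=f(A\setminus\mathfrak m)+\mathfrak b$, $\mathfrak b_{S_{\mathfrak m}}:=\mathfrak bB_{S_{\mathfrak m}}$, and $f_{\mathfrak m}:A_{\mathfrak m}\to B_{S_{\mathfrak m}}$ the ring homomorphism induced by $f$. Assume that for every maximal ideal $\mathfrak m$ of $A$ containing $f^{-1}(\mathfrak b)$, either $f_{\mathfrak m}$ is surjective or $f^{-1}(\mathfrak b)A_{\mathfrak m}\neq\{0\}$. Then the following are equivalent: (i) $A\bowtie^f\mathfrak b$ has weak global dimension at most 1; (ii) $A$ has weak global dimension at most 1, $B_{\mathfrak n}$ is a valuation domain for every maximal ideal $\mathfrak n$ of $B$ not containing $\mathfrak b$, and $\mathfrak b_{S_{\mathfrak m}}=\{0\}$ for every maximal ideal $\mathfrak m$ of $A$ containing $f^{-1}(\mathfrak b)$.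
   Context: All rings are commutative with identity. A ring $R$ has weak global dimension at most 1 if $R_{\mathfrak p}$ is a valuation domain for every prime (equivalently every maximal) ideal $\mathfrak p$ of $R$. $B_{S_{\mathfrak m}}$ denotes the localization of $B$ at the multiplicative set $S_{\mathfrak m}$ (possibly zero). *)

From HB Require Import structures.
From mathcomp Require Import all_boot all_order all_algebra ring.
Set Implicit Arguments. Unset Strict Implicit. Unset Printing Implicit Defensive.
Import GRing.Theory.
Local Open Scope ring_scope.

Section Ideals.
Variable R : comPzRingType.

Definition is_ideal (I : {pred R}) : Prop :=
  [/\ 0 \in I,
      (forall x y, x \in I -> y \in I -> x + y \in I) &
      (forall r x, x \in I -> r * x \in I)].

Record ideal := Ideal { ideal_pred :> {pred R}; ideal_is_ideal : is_ideal ideal_pred }.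

Definition prime_ideal (P : {pred R}) : Prop :=
  [/\ is_ideal P, 1 \notin P &
      (forall x y, x * y \in P -> x \in P \/ y \in P)].

Definition maximal_ideal (M : {pred R}) : Prop :=
  [/\ is_ideal M, 1 \notin M &
      (forall J : {pred R}, is_ideal J -> {subset M <= J} ->
         1 \in J \/ {subset J <= M})].

Definition compl (P : {pred R}) : R -> Prop := fun x => x \notin P.

End Ideals.

(* Localization S^{-1}R at a multiplicative set S : R -> Prop, written out
   on representatives: a fraction r/s is a pair (r, s) with s in S. *)
Section Localization.
Variables (R : comPzRingType) (S : R -> Prop).

Definition in_loc (x : R * R) : Prop := S x.2.

Definition loc_eq (x y : R * R) : Prop :=
  exists2 v, S v & v * (x.1 * y.2 - y.1 * x.2) = 0.

Definition loc_mul (x y : R * R) : R * R := (x.1 * y.1, x.2 * y.2).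
Definition loc0 : R * R := (0, 1).
Definition loc1 : R * R := (1, 1).

Definition loc_valuation_domain : Prop :=
  [/\ ~ loc_eq loc1 loc0,
      (forall x y, in_loc x -> in_loc y -> loc_eq (loc_mul x y) loc0 ->
         loc_eq x loc0 \/ loc_eq y loc0) &
      (forall x y, in_loc x -> in_loc y ->
         (exists2 z, in_loc z & loc_eq (loc_mul x z) y) \/
         (exists2 z, in_loc z & loc_eq (loc_mul y z) x))].

End Localization.

(* weak global dimension at most 1: R_p is a valuation domain for every
   prime ideal p of R *)
Definition weak_gldim_le1 (R : comPzRingType) : Prop :=
  forall P : {pred R}, prime_ideal P -> loc_valuation_domain (compl P).

(* Amalgamated algebra A ⋈^f b = {(a, f a + β) : a ∈ A, β ∈ b} ⊆ A × B *)
Section Amalgamation.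
Variables (A B : comPzRingType) (f : {rmorphism A -> B}) (b : ideal B).

Definition dupl_pred : {pred A * B} := fun x => x.2 - f x.1 \in b.

Lemma dupl_subring_closed : subring_closed dupl_pred.
Proof.
case: (ideal_is_ideal b) => b0 bD bM.
have bN : forall x, x \in b -> - x \in b.
  by move=> x xb; rewrite -mulN1r; apply: bM.
split.
- by rewrite /dupl_pred unfold_in /= rmorph1 subrr.
- case=> [a1 b1] [a2 b2]; rewrite /dupl_pred !unfold_in /= => h1 h2.
  rewrite rmorphB /=.
  have -> : b1 - b2 - (f a1 - f a2) = (b1 - f a1) + - (b2 - f a2) by ring.
  by apply: bD => //; apply: bN.
- case=> [a1 b1] [a2 b2]; rewrite /dupl_pred !unfold_in /= => h1 h2.
  rewrite rmorphM /=.
  have -> : b1 * b2 - f a1 * f a2 =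
     b2 * (b1 - f a1) + f a1 * (b2 - f a2) by ring.
  by apply: bD; apply: bM.
Qed.

HB.instance Definition _ := GRing.isSubringClosed.Build (A * B)%type dupl_pred
  dupl_subring_closed.

Record dupl := Dupl { dupl_val : A * B; _ : dupl_val \in dupl_pred }.

HB.instance Definition _ := [isSub for dupl_val].
HB.instance Definition _ := [Choice of dupl by <:].
HB.instance Definition _ := GRing.SubChoice_isSubComPzRing.Build _ _ dupl dupl_subring_closed.

End Amalgamation.

Definition Sm (A B : comPzRingType) (f : {rmorphism A -> B})
  (m : {pred A}) (b : {pred B}) : B -> Prop :=
  fun y => exists a, exists2 beta, a \notin m /\ beta \in b & y = f a + beta.

(* f_m : A_m -> B_{S_m}, a/s |-> f(a)/f(s), is surjective *)
Definition fm_surjective (A B : comPzRingType) (f : {rmorphism A -> B})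
  (m : {pred A}) (b : {pred B}) : Prop :=
  forall y : B * B, in_loc (Sm f m b) y ->
    exists2 x : A * A, in_loc (compl m) x & loc_eq (Sm f m b) (f x.1, f x.2) y.

(* Write D = A ⋈^f b.  A maximal ideal M of D not containing 0 × b is the
   preimage under the second projection of a maximal ideal n of B with b ⊄ n, and
   that projection induces D_M ≅ B_n.  A maximal ideal containing 0 × b is the
   preimage under the first projection of a maximal ideal m of A; the induced map
   D_M -> A_m is onto, and it is injective as soon as every (0, β) dies in D_M,
   which is what b_{S_m} = 0 gives (and is automatic if f^{-1}(b) ⊄ m).  Being a
   valuation domain passes along these isomorphisms, and from maximal ideals to
   all primes.  Conversely, A is a retract of D, and since (a, 0)(0, β) = 0 in the
   domain D_M for a ∈ f^{-1}(b), either a dies in A_m or β dies in B_{S_m}; the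
   hypothesis on f_m forces the second alternative. *)

From HB Require Import structures.
From mathcomp Require Import all_boot all_order all_algebra ring.
From mathcomp Require Import boolp classical_sets.
Import GRing.Theory.
Set Implicit Arguments. Unset Strict Implicit. Unset Printing Implicit Defensive.
Local Open Scope ring_scope.

Section Ideals.
Variable R : comPzRingType.
Implicit Types (I M P Q : {pred R}) (x y : R).

Lemma ideal0 I : is_ideal I -> 0 \in I.
Proof. by case. Qed.

Lemma idealD I x y : is_ideal I -> x \in I -> y \in I -> x + y \in I.
Proof. by case=> _ + _; apply. Qed.

Lemma idealMl I r x : is_ideal I -> x \in I -> r * x \in I.
Proof. by case=> _ _; apply. Qed.

Lemma idealMr I r x : is_ideal I -> x \in I -> x * r \in I.
Proof. by rewrite mulrC; apply: idealMl. Qed.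

Lemma idealN I x : is_ideal I -> x \in I -> - x \in I.
Proof. by rewrite -mulN1r; apply: idealMl. Qed.

Lemma idealB I x y : is_ideal I -> x \in I -> y \in I -> x - y \in I.
Proof. by move=> II xI yI; rewrite idealD ?idealN. Qed.

Lemma idealDr I x y : is_ideal I -> y \in I -> (x + y \in I) = (x \in I).
Proof.
move=> II yI; apply/idP/idP => [xyI|xI]; last exact: idealD.
by rewrite -(addrK y x); apply: idealB.
Qed.

Lemma prime_idealM_notin P x y :
  prime_ideal P -> x \notin P -> y \notin P -> x * y \notin P.
Proof. by case=> _ _ Pp xP yP; apply/negP => /Pp[]; apply/negP. Qed.

Lemma prime_ideal_mull P e :
  prime_ideal P -> e \notin P -> forall x, (e * x \in P) = (x \in P).
Proof.
move=> [PI _ Pp] eP x; apply/idP/idP => [/Pp[] // eP'|]; last exact: idealMl.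
by rewrite eP' in eP.
Qed.

Lemma maximal_ideal_comax M d : maximal_ideal M -> d \notin M ->
  exists c m, m \in M /\ 1 = m + c * d.
Proof.
move=> [MI M1 Mmax] dM.
pose J : {pred R} := fun e => `[< exists c m, m \in M /\ e = m + c * d >].
have JI : is_ideal J.
  split; rewrite ?unfold_in.
  - by apply/asboolP; exists 0, 0; rewrite ideal0 // mul0r addr0.
  - move=> x y; rewrite !unfold_in.
    move=> /asboolP[c1 [m1 [m1M ->]]] /asboolP[c2 [m2 [m2M ->]]].
    by apply/asboolP; exists (c1 + c2), (m1 + m2); rewrite idealD //; split=> //; ring.
  - move=> r x; rewrite !unfold_in => /asboolP[c [m [mM ->]]].
    by apply/asboolP; exists (r * c), (r * m); rewrite idealMl //; split=> //; ring.
have MJ : {subset M <= J}.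
  by move=> x xM; rewrite unfold_in; apply/asboolP; exists 0, x; rewrite mul0r addr0.
case: (Mmax J JI MJ) => [|JM]; first by rewrite unfold_in => /asboolP.
case/negP: dM; apply: JM; rewrite unfold_in.
by apply/asboolP; exists 1, 0; rewrite ideal0 // mul1r add0r.
Qed.

Lemma maximal_prime M : maximal_ideal M -> prime_ideal M.
Proof.
move=> MM; case: (MM) => MI M1 _; split=> // x y xyM.
have [xM|xM] := boolP (x \in M); [by left | right].
have [c [m [mM e]]] := maximal_ideal_comax MM xM.
have -> : y = m * y + c * (x * y) by rewrite mulrA -mulrDl -e mul1r.
by apply: idealD => //; [exact: idealMr | exact: idealMl].
Qed.

Lemma exists_maximal_ideal I : is_ideal I -> 1 \notin I ->
  exists M, maximal_ideal M /\ {subset I <= M}.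
Proof.
move=> II I1.
pose good (X : R -> bool) := [/\ is_ideal X, {subset I <= X} & 1 \notin X].
pose le (X Y : {X | good X}) := `[< {subset sval X <= sval Y} >].
have goodI : good I by split.
have [||C Ctot|[M [MI IM M1]] Mmax] := @ZL_preorder _ (exist good I goodI) le.
- by move=> X; apply/asboolP.
- by move=> X Y Z /asboolP XY /asboolP YZ; apply/asboolP => x /XY /YZ.
- (* I is included in the union so that the empty chain is bounded too. *)
  pose U : {pred R} := fun x => `[< x \in I \/ exists2 X, C X & x \in sval X >].
  have sub_U X : C X -> {subset sval X <= U}.
    by move=> CX x xX; rewrite unfold_in; apply/asboolP; right; exists X.
  have IU : {subset I <= U} by move=> x xI; rewrite unfold_in; apply/asboolP; left.
  have common x y : x \in U -> y \in U ->
      exists2 X : {X | good X}, x \in sval X & y \in sval X /\ {subset sval X <= U}.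
    have I_sub (X : {X | good X}) : {subset I <= sval X} by case: X => ? [].
    rewrite !unfold_in => /asboolP[xI|[X CX xX]] /asboolP[yI|[Y CY yY]].
    + by exists (exist good I goodI).
    + by exists Y; [exact: I_sub | split=> //; exact: sub_U].
    + by exists X => //; split; [exact: I_sub | exact: sub_U].
    + have [/asboolP XY|/asboolP YX] := Ctot X Y CX CY.
      * by exists Y; [exact: XY | split=> //; exact: sub_U].
      * by exists X => //; split; [exact: YX | exact: sub_U].
  have UI : is_ideal U.
    split; first by apply: IU; apply: ideal0.
    - move=> x y xU yU; have [[X [XI _ _]] /= xX [yX XU]] := common x y xU yU.
      by apply: XU; apply: idealD.
    - move=> r x xU; have [[X [XI _ _]] /= xX [_ XU]] := common x x xU xU.
      by apply: XU; apply: idealMl.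
  have U1 : 1 \notin U.
    rewrite unfold_in; apply/negP => /asboolP[|[[X [_ _ X1]] _ /=]]; exact/negP.
  by exists (exist good U (And3 UI IU U1)) => X CX; apply/asboolP; apply: sub_U.
- exists M; split=> //; split=> // J JI MJ.
  have [J1|J1] := boolP (1 \in J); [by left | right].
  have goodJ : good J by split=> // x /IM /MJ.
  by have /asboolP := Mmax (exist good J goodJ) (introT (asboolP _) MJ).
Qed.
End Ideals.

Section Comap.
Variables (T R : comPzRingType) (h : {rmorphism T -> R}).
Variables (I : {pred R}) (J : {pred T}).
Hypothesis memJ : forall t, (t \in J) = (h t \in I).

Lemma is_ideal_comap : is_ideal I -> is_ideal J.
Proof.
move=> II; split=> [|x y|r x]; rewrite !memJ ?rmorph0 ?rmorphD ?rmorphM.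
- exact: ideal0.
- exact: idealD.
- exact: idealMl.
Qed.

Lemma prime_ideal_comap : prime_ideal I -> prime_ideal J.
Proof.
move=> [II I1 Ip]; split; first exact: is_ideal_comap.
  by rewrite memJ rmorph1.
by move=> x y; rewrite !memJ rmorphM; apply: Ip.
Qed.

End Comap.

Lemma prime_ideal_preim (T R : comPzRingType) (h : {rmorphism T -> R}) P :
  prime_ideal P -> prime_ideal (preim h P).
Proof. exact: prime_ideal_comap. Qed.

Lemma maximal_ideal_retract (R T : comPzRingType)
    (g : {rmorphism R -> T}) (h : {rmorphism T -> R}) (m : {pred R}) (M : {pred T}) :
  cancel g h -> (forall t, (t \in M) = (h t \in m)) ->
  maximal_ideal M -> maximal_ideal m.
Proof.
move=> gK memM [MI M1 Mmax].
have memm r : (r \in m) = (g r \in M) by rewrite memM gK.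
split; first exact: is_ideal_comap memm MI.
  by rewrite memm rmorph1.
move=> J JI mJ; have hJI : is_ideal (preim h J) by apply: is_ideal_comap JI.
have MhJ : {subset M <= preim h J} by move=> t; rewrite memM inE; apply: mJ.
case: (Mmax _ hJI MhJ) => [|hJM]; first by rewrite inE rmorph1; left.
by right=> r rJ; rewrite memm; apply: hJM; rewrite inE gK.
Qed.

Section Localization.
Variables (R : comPzRingType) (S : R -> Prop).

(* Properties of S^{-1}R stated on numerators: [loc_zero r] says r/1 = 0 and
   [loc_dvd r1 r2] says that r1/1 divides r2/1. *)
Definition loc_zero (r : R) := exists2 v, S v & v * r = 0.

Definition loc_dvd (r1 r2 : R) :=
  exists z1 z2 v, [/\ S z2, S v & v * (r1 * z1 - r2 * z2) = 0].

Definition loc_integral :=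
  forall r1 r2, loc_zero (r1 * r2) -> loc_zero r1 \/ loc_zero r2.

Definition loc_comparable := forall r1 r2, loc_dvd r1 r2 \/ loc_dvd r2 r1.

Lemma loc_eq0P r s : loc_eq S (r, s) (0, 1) <-> loc_zero r.
Proof. by rewrite /loc_eq /= mul0r subr0 mulr1. Qed.

Lemma loc_zeroMl a r : loc_zero r -> loc_zero (a * r).
Proof. by case=> v Sv vr; exists v => //; rewrite mulrCA vr mulr0. Qed.

End Localization.

Lemma loc_valuation_domainP (R : comPzRingType) (S : R -> Prop) :
  S 1 -> ~ S 0 ->
  loc_valuation_domain S <-> loc_integral S /\ loc_comparable S.
Proof.
move=> S1 NS0; split=> [[_ Sdom Sval]|[Sint Scmp]].
  split=> [r1 r2 [v Sv vr]|r1 r2].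
    have /Sdom : loc_eq S (loc_mul (r1, 1) (r2, v)) (0, 1) by apply/loc_eq0P; exists v.
    by move=> /(_ S1 Sv)[] /loc_eq0P; [left | right].
  have [[[z1 z2] Sz2 [v Sv e]]|[[z1 z2] Sz2 [v Sv e]]] := Sval (r1, 1) (r2, 1) S1 S1;
    [left | right]; exists z1, z2, v; (split=> //; rewrite -e /=; congr (_ * _); ring).
split=> [/loc_eq0P[v Sv]|[x1 x2] [y1 y2] _ _ /loc_eq0P /Sint[]|[x1 x2] [y1 y2] Sx2 Sy2].
- by rewrite mulr1 => v0; apply: NS0; rewrite -v0.
- by move=> x0; left; apply/loc_eq0P.
- by move=> y0; right; apply/loc_eq0P.
have [[z1 [z2 [v [Sz2 Sv e]]]]|[z1 [z2 [v [Sz2 Sv e]]]]] := Scmp (x1 * y2) (y1 * x2);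
  [left | right]; exists (z1, z2); rewrite /in_loc //=; exists v => //;
  rewrite -e /=; congr (_ * _); ring.
Qed.

Section Map.
Variables (T R : comPzRingType) (h : {rmorphism T -> R}).
Variables (S' : T -> Prop) (S : R -> Prop).
Hypothesis hS : forall t, S' t -> S (h t).

Lemma loc_zero_rmorph t : loc_zero S' t -> loc_zero S (h t).
Proof. by case=> v S'v vt; exists (h v); [exact: hS | rewrite -rmorphM vt rmorph0]. Qed.

Lemma loc_dvd_rmorph t1 t2 : loc_dvd S' t1 t2 -> loc_dvd S (h t1) (h t2).
Proof.
case=> z1 [z2 [v [S'z2 S'v e]]]; exists (h z1), (h z2), (h v).
split; [exact: hS | exact: hS |].
by have := congr1 h e; rewrite rmorphM rmorphB !rmorphM rmorph0.
Qed.

End Map.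

Lemma compl_prime1 (R : comPzRingType) (P : {pred R}) : prime_ideal P -> compl P 1.
Proof. by case. Qed.

Lemma compl_prime0 (R : comPzRingType) (P : {pred R}) : prime_ideal P -> ~ compl P 0.
Proof. by case=> PI _ _; rewrite /compl ideal0. Qed.

Section PrimeLocalization.
Variables (R : comPzRingType) (P : {pred R}).
Hypothesis PP : prime_ideal P.

Lemma loc_zeroMl_cancel c r :
  c \notin P -> loc_zero (compl P) (c * r) -> loc_zero (compl P) r.
Proof.
move=> cP [v vP vcr]; exists (v * c); last by rewrite -mulrA.
exact: prime_idealM_notin.
Qed.

Lemma loc_dvdM_cancel c1 c2 r1 r2 : c2 \notin P ->
  loc_dvd (compl P) (c1 * r1) (c2 * r2) -> loc_dvd (compl P) r1 r2.
Proof.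
move=> c2P [z1 [z2 [v [z2P vP e]]]]; exists (c1 * z1), (c2 * z2), v.
by split=> //; [exact: prime_idealM_notin | rewrite -e; congr (_ * _); ring].
Qed.

End PrimeLocalization.

Lemma loc_valuation_domain_primeP (R : comPzRingType) (P : {pred R}) :
  prime_ideal P ->
  loc_valuation_domain (compl P) <->
  loc_integral (compl P) /\ loc_comparable (compl P).
Proof.
by move=> PP; apply: loc_valuation_domainP; [exact: compl_prime1 | exact: compl_prime0].
Qed.

Lemma loc_valuation_domain_le (R : comPzRingType) (P Q : {pred R}) :
  prime_ideal P -> prime_ideal Q -> {subset P <= Q} ->
  loc_valuation_domain (compl Q) -> loc_valuation_domain (compl P).
Proof.
move=> PP PQ sPQ /(loc_valuation_domain_primeP PQ)[Qint Qcmp].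
have QP x : compl Q x -> compl P x by apply: contra => /sPQ.
apply/(loc_valuation_domain_primeP PP); split=> [r1 r2 [s sP e]|r1 r2].
  have : loc_zero (compl Q) (s * (r1 * r2)).
    by exists 1; [exact: compl_prime1 | rewrite mul1r].
  case/Qint=> [[w /QP wP ws]|].
    by case: (compl_prime0 PP); rewrite -ws; apply: prime_idealM_notin.
  by move=> /Qint[] /(loc_zero_rmorph (h := idfun) QP); [left | right].
by case: (Qcmp r1 r2) => /(loc_dvd_rmorph (h := idfun) QP); [left | right].
Qed.

Lemma weak_gldim_le1_maximal (R : comPzRingType) :
  (forall M : {pred R}, maximal_ideal M -> loc_valuation_domain (compl M)) ->
  weak_gldim_le1 R.
Proof.
move=> HM P PP; case: (PP) => PI P1 _.
have [M [MM PM]] := exists_maximal_ideal PI P1.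
exact: loc_valuation_domain_le PP (maximal_prime MM) PM (HM M MM).
Qed.

Lemma weak_gldim_le1_retract (R T : comPzRingType)
    (g : {rmorphism R -> T}) (h : {rmorphism T -> R}) :
  cancel g h -> weak_gldim_le1 T -> weak_gldim_le1 R.
Proof.
move=> gK HT P PP; have hPP := prime_ideal_preim h PP.
have [Tint Tcmp] := (loc_valuation_domain_primeP hPP).1 (HT _ hPP).
have hS t : compl (preim h P) t -> compl P (h t) by [].
apply/(loc_valuation_domain_primeP PP); split=> [r1 r2 [s sP e]|r1 r2].
  have : loc_zero (compl (preim h P)) (g r1 * g r2).
    by exists (g s); rewrite /compl ?inE ?gK // -!rmorphM e rmorph0.
  by case/Tint=> /(loc_zero_rmorph hS); rewrite gK; [left | right].
by case: (Tcmp (g r1) (g r2)) => /(loc_dvd_rmorph hS); rewrite !gK; [left | right].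
Qed.

Section Transfer.
Variables (T R : comPzRingType) (h : {rmorphism T -> R}).
Variables (P : {pred T}) (Q : {pred R}).
Hypotheses (PQ : prime_ideal Q) (memP : forall t, (t \in P) = (h t \in Q)).
(* Together, [h_lift] and [h_ker] say that h induces an isomorphism T_P ≅ R_Q. *)
Hypothesis h_lift : forall r, exists t c, c \notin P /\ h t = h c * r.
Hypothesis h_ker : forall t, h t = 0 -> loc_zero (compl P) t.

Let hS t : compl P t -> compl Q (h t).
Proof. by rewrite /compl memP. Qed.

Lemma loc_zero_transfer t : loc_zero (compl P) t <-> loc_zero (compl Q) (h t).
Proof.
split=> [|[v vQ vt]]; first exact: loc_zero_rmorph.
have [w [c [cP e]]] := h_lift v.
have [k kP kwt] : loc_zero (compl P) (w * t).
  by apply: h_ker; rewrite rmorphM e -mulrA vt mulr0.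
exists (k * w); last by rewrite -mulrA.
rewrite /compl memP rmorphM e.
exact: prime_idealM_notin PQ (hS kP) (prime_idealM_notin PQ (hS cP) vQ).
Qed.

Lemma loc_dvd_transfer t1 t2 :
  loc_dvd (compl P) t1 t2 <-> loc_dvd (compl Q) (h t1) (h t2).
Proof.
split=> [|[z1 [z2 [v [z2Q vQ e]]]]]; first exact: loc_dvd_rmorph.
have [w1 [c1 [c1P e1]]] := h_lift z1; have [w2 [c2 [c2P e2]]] := h_lift z2.
pose u := t1 * (w1 * c2) - t2 * (w2 * c1).
have hu : h u = (h c1 * h c2) * (h t1 * z1 - h t2 * z2).
  by rewrite rmorphB !rmorphM e1 e2; ring.
have [k kP ku] : loc_zero (compl P) u.
  by apply/loc_zero_transfer; exists v => //; rewrite hu mulrCA e mulr0.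
exists (w1 * c2), (w2 * c1), k; split=> //.
rewrite /compl memP rmorphM e2 mulrC.
exact: prime_idealM_notin PQ (hS c1P) (prime_idealM_notin PQ (hS c2P) z2Q).
Qed.

Lemma loc_integral_transfer : loc_integral (compl P) <-> loc_integral (compl Q).
Proof.
split=> [Pint r1 r2 r12|Qint t1 t2 /loc_zero_transfer].
  have [t1 [c1 [c1P e1]]] := h_lift r1; have [t2 [c2 [c2P e2]]] := h_lift r2.
  have : loc_zero (compl P) (t1 * t2).
    by apply/loc_zero_transfer; rewrite rmorphM e1 e2 mulrACA; apply: loc_zeroMl.
  case/Pint=> /loc_zero_transfer.
    by rewrite e1 => /(loc_zeroMl_cancel PQ (hS c1P)); left.
  by rewrite e2 => /(loc_zeroMl_cancel PQ (hS c2P)); right.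
by rewrite rmorphM => /Qint[] /loc_zero_transfer; [left | right].
Qed.

Lemma loc_comparable_transfer :
  loc_comparable (compl P) <-> loc_comparable (compl Q).
Proof.
split=> [Pcmp r1 r2|Qcmp t1 t2].
  have [t1 [c1 [c1P e1]]] := h_lift r1; have [t2 [c2 [c2P e2]]] := h_lift r2.
  case: (Pcmp t1 t2) => /loc_dvd_transfer; rewrite e1 e2.
    by move=> /(loc_dvdM_cancel PQ (hS c2P)); left.
  by move=> /(loc_dvdM_cancel PQ (hS c1P)); right.
by case: (Qcmp (h t1) (h t2)) => /loc_dvd_transfer; [left | right].
Qed.

Lemma loc_valuation_domain_transfer :
  loc_valuation_domain (compl P) <-> loc_valuation_domain (compl Q).
Proof.
have P1 : compl P 1 by rewrite /compl memP rmorph1; case: PQ.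
have P0 : ~ compl P 0 by rewrite /compl memP rmorph0; exact: compl_prime0.
rewrite (loc_valuation_domainP P1 P0) (loc_valuation_domain_primeP PQ).
by rewrite loc_integral_transfer loc_comparable_transfer.
Qed.

End Transfer.

Section Amalgamation.
Variables (A B : comPzRingType) (f : {rmorphism A -> B}) (b : ideal B).
Local Notation D := (dupl f b).
Let bI : is_ideal b := ideal_is_ideal b.

Definition dfst : {rmorphism D -> A} := fst \o val.
Definition dsnd : {rmorphism D -> B} := snd \o val.

Lemma dupl_eq (x y : D) : dfst x = dfst y -> dsnd x = dsnd y -> x = y.
Proof.
move=> e1 e2; apply: val_inj.
by rewrite [val x]surjective_pairing [val y]surjective_pairing; congr pair.
Qed.

Lemma dsnd_subf (d : D) : dsnd d - f (dfst d) \in b.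
Proof. by have := valP d; rewrite unfold_in. Qed.

Lemma mem_dupl (x : A * B) : x.2 - f x.1 \in b -> x \in dupl_pred f b.
Proof. by rewrite unfold_in. Qed.

Fact ddiag_subproof (a : A) : (a, f a) \in dupl_pred f b.
Proof. by apply: mem_dupl; rewrite /= subrr ideal0. Qed.

Definition ddiag (a : A) : D := Sub (a, f a) (ddiag_subproof a).

Lemma dfst_ddiag a : dfst (ddiag a) = a. Proof. by []. Qed.
Lemma dsnd_ddiag a : dsnd (ddiag a) = f a. Proof. by []. Qed.

Fact ddiag_is_zmod_morphism : zmod_morphism ddiag.
Proof.
by move=> x y; apply: dupl_eq; rewrite !rmorphB /= ?dfst_ddiag ?dsnd_ddiag ?rmorphB.
Qed.

Fact ddiag_is_monoid_morphism : monoid_morphism ddiag.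
Proof.
split; first by apply: dupl_eq; rewrite ?rmorph1 ?dfst_ddiag ?dsnd_ddiag ?rmorph1.
by move=> x y; apply: dupl_eq; rewrite !rmorphM /= ?dfst_ddiag ?dsnd_ddiag ?rmorphM.
Qed.

HB.instance Definition _ :=
  GRing.isZmodMorphism.Build A D ddiag ddiag_is_zmod_morphism.
HB.instance Definition _ :=
  GRing.isMonoidMorphism.Build A D ddiag ddiag_is_monoid_morphism.

(* (0, y) for y in b, and 0 otherwise. *)
Definition dbeta (y : B) : D := insubd 0 (0, y).

Lemma dfst_dbeta y : dfst (dbeta y) = 0.
Proof.
rewrite /dbeta /insubd; case: insubP => [u _ e|_]; rewrite /odflt /oapp.
  by rewrite /dfst /= e.
exact: rmorph0.
Qed.

Lemma dsnd_dbeta y : y \in b -> dsnd (dbeta y) = y.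
Proof.
by move=> yb; rewrite /dsnd /= insubdK //; apply: mem_dupl; rewrite /= rmorph0 subr0.
Qed.

Lemma dsnd_ker (d : D) : dfst d = 0 -> dsnd d \in b.
Proof. by move=> d0; have := dsnd_subf d; rewrite d0 rmorph0 subr0. Qed.

Lemma dbetaE (d : D) : dfst d = 0 -> d = dbeta (dsnd d).
Proof. by move=> d0; apply: dupl_eq; rewrite ?dfst_dbeta ?dsnd_dbeta ?dsnd_ker. Qed.

Lemma dupl_decomp (d : D) : d = ddiag (dfst d) + dbeta (dsnd d - f (dfst d)).
Proof.
apply: dupl_eq; rewrite !rmorphD.
- by rewrite dfst_ddiag dfst_dbeta addr0.
- by rewrite dsnd_ddiag dsnd_dbeta ?dsnd_subf // addrC subrK.
Qed.

Lemma dbetaMr y d : y \in b -> dbeta y * d = dbeta (y * dsnd d).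
Proof.
move=> yb; apply: dupl_eq; rewrite rmorphM.
  by rewrite !dfst_dbeta mul0r.
by rewrite !dsnd_dbeta ?idealMr.
Qed.

Lemma dbetaD y z : y \in b -> z \in b -> dbeta (y + z) = dbeta y + dbeta z.
Proof.
move=> yb zb; apply: dupl_eq; rewrite rmorphD.
  by rewrite !dfst_dbeta addr0.
by rewrite !dsnd_dbeta ?idealD.
Qed.

Lemma dbeta0 : dbeta 0 = 0.
Proof. by apply: dupl_eq; rewrite rmorph0 ?dfst_dbeta ?dsnd_dbeta ?ideal0. Qed.

(* (a, 0), when f a lies in b. *)
Definition dleft (a : A) : D := ddiag a - dbeta (f a).

Lemma dfst_dleft a : dfst (dleft a) = a.
Proof. by rewrite rmorphB dfst_ddiag dfst_dbeta subr0. Qed.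

Lemma mul_dleft_dbeta a y : f a \in b -> y \in b -> dleft a * dbeta y = 0.
Proof.
move=> fab yb; rewrite mulrC dbetaMr // rmorphB dsnd_ddiag dsnd_dbeta //.
by rewrite subrr mulr0 dbeta0.
Qed.

Lemma SmP (m : {pred A}) y :
  Sm f m b y <-> exists2 d : D, dfst d \notin m & dsnd d = y.
Proof.
split=> [[a [beta [am betab] ->]]|[d dm <-]].
  exists (ddiag a + dbeta beta); first by rewrite rmorphD dfst_ddiag dfst_dbeta addr0.
  by rewrite rmorphD dsnd_ddiag dsnd_dbeta.
by exists (dfst d), (dsnd d - f (dfst d)); [rewrite dsnd_subf | rewrite addrC subrK].
Qed.

Lemma loc_valuation_domain_dsnd (n : {pred B}) (M : {pred D}) y0 :
  prime_ideal n -> y0 \in b -> y0 \notin n ->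
  (forall d, (d \in M) = (dsnd d \in n)) ->
  loc_valuation_domain (compl M) <-> loc_valuation_domain (compl n).
Proof.
move=> nP y0b y0n memM; apply: (loc_valuation_domain_transfer nP memM).
  move=> r; exists (dbeta (y0 * r)), (dbeta y0).
  by rewrite memM !dsnd_dbeta ?idealMr.
move=> d d0; exists (dbeta y0); first by rewrite /compl memM dsnd_dbeta.
by rewrite dbetaMr // d0 mulr0 dbeta0.
Qed.

Lemma loc_valuation_domain_dfst (m : {pred A}) (M : {pred D}) :
  prime_ideal m -> (forall d, (d \in M) = (dfst d \in m)) ->
  (forall y, y \in b -> loc_zero (compl M) (dbeta y)) ->
  loc_valuation_domain (compl M) <-> loc_valuation_domain (compl m).
Proof.
move=> mP memM Mbeta; apply: (loc_valuation_domain_transfer mP memM).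
  move=> r; exists (ddiag r), 1.
  by rewrite memM !rmorph1 dfst_ddiag mul1r; case: mP.
by move=> d d0; rewrite (dbetaE d0); apply: Mbeta; apply: dsnd_ker.
Qed.

Lemma dupl_loc_zero_split (m : {pred A}) a beta :
  1 \notin m -> loc_integral (compl (preim dfst m)) -> f a \in b -> beta \in b ->
  loc_zero (compl m) a \/ loc_zero (Sm f m b) beta.
Proof.
move=> m1 Dint fab betab.
have : loc_zero (compl (preim dfst m)) (dleft a * dbeta beta).
  by exists 1; rewrite ?mul_dleft_dbeta ?mulr0 // /compl inE rmorph1.
have mfst d : compl (preim dfst m) d -> compl m (dfst d) by [].
have mSm d : compl (preim dfst m) d -> Sm f m b (dsnd d).
  by move=> dm; apply/SmP; exists d.
case/Dint=> [/(loc_zero_rmorph mfst) | /(loc_zero_rmorph mSm)].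
  by rewrite dfst_dleft; left.
by rewrite dsnd_dbeta //; right.
Qed.

Lemma loc_zero_dbeta (m : {pred A}) (M : {pred D}) :
  (forall d, (d \in M) = (dfst d \in m)) ->
  ((forall a, f a \in b -> a \in m) ->
     forall beta, beta \in b -> loc_zero (Sm f m b) beta) ->
  forall beta, beta \in b -> loc_zero (compl M) (dbeta beta).
Proof.
move=> memM Hb beta betab.
have [[a fab am]|fbm] := pselect (exists2 a, f a \in b & a \notin m).
  by exists (dleft a); rewrite ?mul_dleft_dbeta // /compl memM dfst_dleft.
have /Hb/(_ beta betab)[w /SmP[d dm <-] dbeta_eq0] : forall a, f a \in b -> a \in m.
  by move=> a fab; apply/negPn/negP => am; apply: fbm; exists a.
exists d; first by rewrite /compl memM.
by rewrite mulrC dbetaMr // mulrC dbeta_eq0 dbeta0.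
Qed.

Lemma Sm_mulf (m : {pred A}) y u :
  prime_ideal m -> Sm f m b y -> u \notin m -> Sm f m b (y * f u).
Proof.
move=> mP [a [beta [am betab] ->]] um; exists (a * u), (beta * f u).
  by split; [exact: prime_idealM_notin | exact: idealMr].
by rewrite rmorphM mulrDl.
Qed.

Lemma loc_zero_Sm_of_fm_surjective (m : {pred A}) beta :
  prime_ideal m -> fm_surjective f m b -> beta \in b ->
  (forall a, f a \in b -> loc_zero (compl m) a \/ loc_zero (Sm f m b) beta) ->
  loc_zero (Sm f m b) beta.
Proof.
move=> mP surj betab Hsplit.
have Sm1 : Sm f m b 1 by exists 1, 0; rewrite ?rmorph1 ?addr0 ?ideal0; case: mP.
have [[x1 x2] /= x2m [w Sw]] := surj (beta, 1) Sm1.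
rewrite /= mulr1 mulrBr => /eqP; rewrite subr_eq0 mulrA => /eqP wx1.
(* beta/1 = f x1/f x2 in B_{S_m}; writing w = f s + g, the product s x1 lies in
   f^{-1}(b). *)
have [s [g [[sm gb] ew]]] := Sw.
have fsx1 : f (s * x1) \in b.
  have -> : f (s * x1) = w * beta * f x2 - g * f x1 by rewrite rmorphM -wx1 ew; ring.
  by apply: idealB => //; apply: idealMr => //; apply: idealMl.
case: (Hsplit _ fsx1) => // -[t tm tsx1].
exists (w * f (t * s * x2)); first by apply: Sm_mulf; rewrite ?prime_idealM_notin.
have -> : w * f (t * s * x2) * beta = f (t * s) * (w * beta * f x2).
  by rewrite !rmorphM; ring.
rewrite -wx1 (_ : f (t * s) * _ = w * f (t * (s * x1))); last by rewrite !rmorphM; ring.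
by rewrite tsx1 rmorph0 mulr0.
Qed.

Lemma loc_zero_Sm_of_loc_integral (m : {pred A}) beta :
  prime_ideal m -> loc_integral (compl (preim dfst m)) ->
  fm_surjective f m b \/ (exists2 a, f a \in b & ~ loc_zero (compl m) a) ->
  beta \in b -> loc_zero (Sm f m b) beta.
Proof.
move=> mP Dint Hm betab.
have Dsplit a (fab : f a \in b) := dupl_loc_zero_split (compl_prime1 mP) Dint fab betab.
case: Hm => [surj|[a fab aN0]]; first exact: loc_zero_Sm_of_fm_surjective.
by case: (Dsplit a fab).
Qed.

Lemma mem_preim_ddiag (M : {pred D}) : is_ideal M ->
  (forall y, y \in b -> dbeta y \in M) ->
  forall d, (d \in M) = (dfst d \in preim ddiag M).
Proof.
by move=> MI Mbeta d; rewrite inE {1}(dupl_decomp d) idealDr ?Mbeta ?dsnd_subf.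
Qed.

Section SndIdeal.
Variables (M : {pred D}) (y0 : B).
Hypotheses (MP : prime_ideal M) (y0b : y0 \in b) (y0M : dbeta y0 \notin M).

Definition snd_ideal : {pred B} := fun y => dbeta (y0 * y) \in M.

Let snd_idealE y : (y \in snd_ideal) = (dbeta (y0 * y) \in M).
Proof. by []. Qed.

Lemma mem_snd_ideal d : (d \in M) = (dsnd d \in snd_ideal).
Proof. by rewrite snd_idealE -dbetaMr // prime_ideal_mull. Qed.

Let dbetaM x y : dbeta (y0 * x) * dbeta (y0 * y) = dbeta y0 * dbeta (y0 * (x * y)).
Proof. by rewrite !dbetaMr ?idealMr // !dsnd_dbeta ?idealMr //; congr dbeta; ring. Qed.

Lemma snd_ideal_prime : prime_ideal snd_ideal.
Proof.
have MI : is_ideal M by case: MP.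
split; first split=> [|x y|r x]; rewrite ?snd_idealE.
- by rewrite mulr0 dbeta0 ideal0.
- by rewrite mulrDr dbetaD ?idealMr //; apply: idealD.
- by move=> xn; rewrite -(prime_ideal_mull MP y0M) -dbetaM; apply: idealMl.
- by rewrite mulr1.
- move=> x y; rewrite !snd_idealE -(prime_ideal_mull MP y0M) -dbetaM.
  by case: MP => _ _; apply.
Qed.

Lemma snd_ideal_notin : y0 \notin snd_ideal.
Proof.
rewrite snd_idealE -[X in dbeta (_ * X)](dsnd_dbeta y0b) -dbetaMr //.
exact: prime_idealM_notin.
Qed.

Lemma snd_ideal_maximal : maximal_ideal M -> maximal_ideal snd_ideal.
Proof.
move=> MM; have [nI n1 _] := snd_ideal_prime; split=> // J JI nJ.
have [J1|J1] := boolP (1 \in J); [by left | right=> y yJ].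
apply/negPn/negP; rewrite snd_idealE => /(maximal_ideal_comax MM)[c [m [mM e]]].
case/negP: J1; have := congr1 dsnd e.
rewrite rmorph1 rmorphD rmorphM dsnd_dbeta ?idealMr // => ->.
apply: idealD => //; first by apply: nJ; rewrite -mem_snd_ideal.
by rewrite mulrA; apply: idealMl.
Qed.

Lemma snd_ideal_not_supset : ~ {subset b <= snd_ideal}.
Proof. by move/(_ y0 y0b); apply/negP; apply: snd_ideal_notin. Qed.

Lemma loc_valuation_domain_snd_ideal :
  loc_valuation_domain (compl M) <-> loc_valuation_domain (compl snd_ideal).
Proof.
exact: loc_valuation_domain_dsnd snd_ideal_prime y0b snd_ideal_notin mem_snd_ideal.
Qed.

End SndIdeal.

End Amalgamation.

Unset Implicit Arguments.

Theorem proposition4p11 (A B : comPzRingType) (f : {rmorphism A -> B})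
  (b : ideal B) :
  (forall m : {pred A}, maximal_ideal m -> (forall a, f a \in b -> a \in m) ->
     fm_surjective f m b \/
     (exists2 a : A, f a \in b & ~ loc_eq (compl m) (a, 1) (0, 1))) ->
  (weak_gldim_le1 (dupl f b) <->
   [/\ weak_gldim_le1 A,
       (forall n : {pred B}, maximal_ideal n -> ~ {subset b <= n} ->
          loc_valuation_domain (compl n)) &
       (forall m : {pred A}, maximal_ideal m -> (forall a, f a \in b -> a \in m) ->
          forall beta, beta \in b -> loc_eq (Sm f m b) (beta, 1) (0, 1))]).
Proof.
move=> Hm; split=> [HD|[HA HBn Hb]].
  split=> [|n nM nb|m mM fbm beta betab].
  - exact: weak_gldim_le1_retract (dfst_ddiag f b) HD.
  - have [y0 y0b y0n] : exists2 y0, y0 \in b & y0 \notin n.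
      by move: nb; apply: contra_notP => nob y yb; apply/negPn/negP => yn; apply: nob; exists y.
    have nP := maximal_prime nM.
    apply/(loc_valuation_domain_dsnd nP y0b y0n (fun _ => erefl)).
    exact/HD/prime_ideal_preim.
  - have mP := maximal_prime mM; have DmP := prime_ideal_preim (dfst f b) mP.
    have [Dint _] := (loc_valuation_domain_primeP DmP).1 (HD _ DmP).
    apply/loc_eq0P/(loc_zero_Sm_of_loc_integral mP Dint) => //.
    by case: (Hm m mM fbm) => [|[a fab /loc_eq0P]]; [left | right; exists a].
apply: weak_gldim_le1_maximal => M MM; have MP := maximal_prime MM.
have [[y0 y0b y0M]|Mbeta] := pselect (exists2 y0, y0 \in b & dbeta f b y0 \notin M).
  apply/(loc_valuation_domain_snd_ideal MP y0b y0M)/HBn.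
    exact: snd_ideal_maximal.
  exact: snd_ideal_not_supset.
have {}Mbeta y : y \in b -> dbeta f b y \in M.
  by move=> yb; apply/negPn/negP => yM; apply: Mbeta; exists y.
have [MI _ _] := MP; have memM := mem_preim_ddiag MI Mbeta.
have mM := maximal_ideal_retract (dfst_ddiag f b) memM MM; have mP := maximal_prime mM.
apply/(loc_valuation_domain_dfst mP memM (loc_zero_dbeta memM _)); last exact: HA.
by move=> fbm beta betab; apply/loc_eq0P; apply: Hb.
Qed.
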